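(* Let $\eta>0$ be such that $\frac{1}{2\eta}$ and $\beta:=\frac{\eta}{300}T$ are integers, and let $\alpha:=\frac{100}{\eta}$ (assumed integer), so $T=3\alpha\beta$. Consider $K+1=3$ actions and the reward sequence consisting of $\beta$ identical batches; batch $i\in[\beta]$ consists of $\alpha$ rounds with reward vector $(1,1,0)$ (rounds $(i-1)3\alpha+1,\dots,(i-1)3\alpha+\alpha$), then $\alpha$ rounds with $(0,1,0)$, then $\alpha$ rounds with $(0,0,1)$. Then agile online gradient ascent with step size $\eta$ incurs swap regret $\Omega(T)$ on this sequence.
   Context: Agile online gradient ascent with step size $\eta$ on $K+1$ actions: $\boldsymbol{\pi}^{(1)}=(\frac{1}{K+1},\dots,\frac{1}{K+1})$; in round $t$ it plays the distribution $\boldsymbol{\pi}^{(t)}$, observes reward vector $\mathbf{r}^{(t)}$, and sets $\boldsymbol{\pi}^{(t+1)}:=\arg\min_{\boldsymbol{\pi}\in\Delta([K+1])}\|\boldsymbol{\pi}-(\boldsymbol{\pi}^{(t)}+\eta\mathbf{r}^{(t)})\|_2$, where $\Delta([K+1])$ is the probability simplex. The swap regret of an algorithm playing $\boldsymbol{\pi}^{(t)}$ against rewards $\mathbf{r}^{(t)}$ is $\max_{\phi:[K+1]\to[K+1]}\sum_{t\in[T]}\sum_{k\in[K+1]}\pi^{(t)}_k\big(r^{(t)}_{\phi(k)}-r^{(t)}_k\big)$. *)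

From HB Require Import structures.
From mathcomp Require Import all_boot all_order all_algebra.
From mathcomp Require Import reals.
Set Implicit Arguments. Unset Strict Implicit. Unset Printing Implicit Defensive.
Import Order.TTheory GRing.Theory Num.Theory.
Local Open Scope ring_scope.

Section Defs.
Variable R : realType.

(* probability simplex on K+1 actions, K+1 = n *)
Definition in_simplex (n : nat) (p : 'I_n -> R) : Prop :=
  (forall k, 0 <= p k) /\ \sum_(k < n) p k = 1.

Definition dist2 (n : nat) (p y : 'I_n -> R) : R :=
  Num.sqrt (\sum_(k < n) (p k - y k) ^+ 2).

(* Agile online gradient ascent with step size eta, rounds indexed from 0:
   pi 0 is uniform, and pi (t+1) is the (unique) Euclidean projection of
   pi t + eta * r t onto the simplex (stated as: a minimiser of the distance). *)
Definition agile_oga (n : nat) (eta : R) (r : nat -> 'I_n -> R)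
    (pi : nat -> 'I_n -> R) : Prop :=
  (forall k, pi 0%N k = (n%:R)^-1) /\
  forall t : nat,
    let y := fun k => pi t k + eta * r t k in
    in_simplex (pi t.+1) /\
    forall p : 'I_n -> R, in_simplex p -> dist2 (pi t.+1) y <= dist2 p y.

Definition swap_regret_phi (n T : nat) (pi r : nat -> 'I_n -> R)
    (phi : {ffun 'I_n -> 'I_n}) : R :=
  \sum_(t < T) \sum_(k < n) pi t k * (r t (phi k) - r t k).

(* swap regret = max over all phi : [n] -> [n] (the identity is included,
   so it is used as the initial value of the iterated max) *)
Definition swap_regret (n T : nat) (pi r : nat -> 'I_n -> R) : R :=
  \big[Num.max/swap_regret_phi T pi r [ffun k => k]]_(phi : {ffun 'I_n -> 'I_n})
     swap_regret_phi T pi r phi.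

(* The reward sequence (0-based rounds): every block of 3*alpha rounds consists
   of alpha rounds of (1,1,0), alpha rounds of (0,1,0), alpha rounds of (0,0,1). *)
Definition batch_rewards (alpha : nat) (t : nat) (k : 'I_3) : R :=
  let j := (t %% (3 * alpha))%N in
  if (j < alpha)%N then (if (k < 2)%N then 1 else 0)
  else if (j < 2 * alpha)%N then (if k == 1%N :> nat then 1 else 0)
  else (if k == 2%N :> nat then 1 else 0).

End Defs.

From mathcomp Require Import all_boot all_order all_algebra.
From mathcomp Require Import reals ring lra zify.
Import Order.TTheory GRing.Theory Num.Theory.

Set Implicit Arguments.
Unset Strict Implicit.
Unset Printing Implicit Defensive.

Local Open Scope ring_scope.

(* The Euclidean projection onto the simplex is a threshold map:
   [pi (t+1) k = max (pi t k + eta r t k - l) 0] for some [l].  A case analysis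
   on which coordinates are clipped shows how the iterate moves in each phase
   of a batch.  Under (1,1,0) actions 0 and 1 stay equal while action 2 loses
   [2 eta / 3] per round, so after [alpha = 100 / eta] rounds the iterate is
   (1/2, 1/2, 0).  Under (0,1,0) action 0 loses at most [eta] per round.  Under
   (0,0,1) actions 0 and 1 each lose [eta / 3] per round until they vanish,
   so the next batch starts balanced again.  The swap sending action 0 to
   action 1 never loses, and in round [j < m = 1 / (2 eta)] of the second
   phase it gains at least [1/2 - j eta]; this is [m / 4 = 3 alpha / 2400]
   per batch of [3 alpha] rounds. *)

Section SimplexProjection.
Variables (R : realType) (n : nat).
Implicit Types (x y q : 'I_n -> R).

Lemma first_order_coef_ge0 (a b : R) :
  (forall s, 0 < s -> s <= 1 -> 0 <= 2 * s * a + s ^+ 2 * b) -> 0 <= b -> 0 <= a.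
Proof.
move=> Hs b_ge0; rewrite leNgt; apply/negP => a_lt0.
have ba_gt0 : 0 < b - a by lra.
pose s := - a / (b - a).
have s_gt0 : 0 < s by apply: divr_gt0; lra.
have s_le1 : s <= 1 by rewrite ler_pdivrMr; lra.
have := Hs s s_gt0 s_le1.
have -> : 2 * s * a + s ^+ 2 * b = a ^+ 2 * (2 * a - b) / (b - a) ^+ 2 by rewrite /s; field; lra.
rewrite pmulr_lge0 ?invr_gt0 ?exprn_gt0 //.
have : 0 < a ^+ 2 by rewrite expr2; nra.
nra.
Qed.

Lemma simplex_segment x q s : 0 <= s -> s <= 1 -> in_simplex x -> in_simplex q ->
  in_simplex (fun k => x k + s * (q k - x k)).
Proof.
move=> s_ge0 s_le1 [x_ge0 x_sum] [q_ge0 q_sum]; split.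
  by move=> k; have := x_ge0 k; have := q_ge0 k; nra.
by rewrite big_split /= -mulr_sumr sumrB x_sum q_sum subrr mulr0 addr0.
Qed.

Lemma simplex_delta (j : 'I_n) : in_simplex (fun k => (k == j)%:R : R).
Proof.
split=> [k|]; first exact: ler0n.
by rewrite (bigD1 j) //= eqxx big1 ?addr0 // => k /negbTE ->.
Qed.

Lemma simplex_projection_variational x y : in_simplex x ->
    (forall q, in_simplex q -> dist2 x y <= dist2 q y) ->
  forall q, in_simplex q -> 0 <= \sum_k (x k - y k) * (q k - x k).
Proof.
move=> Sx x_min q Sq.
apply: (@first_order_coef_ge0 _ (\sum_k (q k - x k) ^+ 2)); last first.
  by apply: sumr_ge0 => k _; exact: sqr_ge0.
move=> s s_gt0 s_le1.
have := x_min _ (simplex_segment (ltW s_gt0) s_le1 Sx Sq).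
rewrite /dist2 ler_sqrt; last by apply: sumr_ge0 => k _; exact: sqr_ge0.
have -> : \sum_k (x k + s * (q k - x k) - y k) ^+ 2 =
    \sum_k (x k - y k) ^+ 2 + (2 * s * \sum_k (x k - y k) * (q k - x k)
                               + s ^+ 2 * \sum_k (q k - x k) ^+ 2).
  rewrite !mulr_sumr -!big_split /=; apply: eq_bigr => k _; ring.
by rewrite lerDl.
Qed.

Lemma simplex_projection_threshold x y : in_simplex x ->
    (forall q, in_simplex q -> dist2 x y <= dist2 q y) ->
  exists l, forall k, x k = Num.max (y k - l) 0.
Proof.
move=> Sx x_min; have [x_ge0 x_sum] := Sx.
pose l := \sum_k x k * (y k - x k).
have le_l j : y j - x j <= l.
  have := simplex_projection_variational Sx x_min (simplex_delta j).
  rewrite (eq_bigr (fun k => (x k - y k) * (k == j)%:R + x k * (y k - x k))) => [|k _]; last by ring.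
  rewrite big_split /= (bigD1 j) //= eqxx mulr1 big1 => [|k /negbTE ->]; last by rewrite mulr0.
  rewrite addr0 -/l; lra.
have slack_ge0 k : 0 <= x k * (l - (y k - x k)) by rewrite mulr_ge0 ?subr_ge0.
have slack0 : \sum_k x k * (l - (y k - x k)) = 0.
  rewrite (eq_bigr (fun k => l * x k - x k * (y k - x k))) => [|k _]; last by ring.
  by rewrite sumrB -mulr_sumr x_sum mulr1 subrr.
exists l => k; have /eqP := psumr_eq0P (fun k _ => slack_ge0 k) slack0 (i := k) isT.
have := x_ge0 k; have := le_l k; rewrite mulf_eq0 => ? ? /orP[/eqP xk0|/eqP ?].
  by rewrite xk0 max_r //; lra.
by rewrite max_l; lra.
Qed.
End SimplexProjection.

Definition i0 : 'I_3 := @Ordinal 3 0 isT.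
Definition i1 : 'I_3 := @Ordinal 3 1 isT.
Definition i2 : 'I_3 := @Ordinal 3 2 isT.

Section ThreeActions.
Variable R : realType.

Lemma sum3 (f : 'I_3 -> R) : \sum_k f k = f i0 + f i1 + f i2.
Proof.
by rewrite !big_ord_recr big_ord0 /= add0r; congr (f _ + f _ + f _); apply: val_inj.
Qed.

Lemma in_simplex3 (p : 'I_3 -> R) : in_simplex p ->
  [/\ 0 <= p i0, 0 <= p i1, 0 <= p i2 & p i0 + p i1 + p i2 = 1 :> R].
Proof. by case=> p_ge0; rewrite sum3. Qed.

Lemma eq_max0P (x a : R) : x = Num.max a 0 -> (x = 0 /\ a <= 0) \/ x = a.
Proof. by move->; case: leP; [left | right]. Qed.

Variables (e l : R) (p r x : 'I_3 -> R).
Hypotheses (Sp : in_simplex p) (Sx : in_simplex x)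
  (x_def : forall k, x k = Num.max (p k + e * r k - l) 0).

Lemma step3_cases :
  [/\ x i0 = 0 /\ p i0 + e * r i0 - l <= 0 \/ x i0 = p i0 + e * r i0 - l,
      x i1 = 0 /\ p i1 + e * r i1 - l <= 0 \/ x i1 = p i1 + e * r i1 - l &
      x i2 = 0 /\ p i2 + e * r i2 - l <= 0 \/ x i2 = p i2 + e * r i2 - l].
Proof. by split; apply: eq_max0P. Qed.

Lemma step_reward110 : r i0 = 1 -> r i1 = 1 -> r i2 = 0 -> p i0 = p i1 ->
  x i0 = x i1 /\ (x i2 = 0 \/ x i2 <= p i2 - 2/3 * e).
Proof.
move=> r0 r1 r2 p01; have [p0 p1 p2 ps] := in_simplex3 Sp.
have [x0 x1 x2 xs] := in_simplex3 Sx.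
have [] := step3_cases; rewrite r0 r1 r2 !mulr1 !mulr0 !addr0.
by case=> [[a0 b0]|c0]; case=> [[a1 b1]|c1]; case=> [[a2 b2]|c2]; split; lra.
Qed.

Lemma step_reward010 : 0 <= e -> r i0 = 0 -> r i1 = 1 -> r i2 = 0 -> p i0 - e <= x i0.
Proof.
move=> e_ge0 r0 r1 r2; have [p0 p1 p2 ps] := in_simplex3 Sp.
have [x0 x1 x2 xs] := in_simplex3 Sx.
have [] := step3_cases; rewrite r0 r1 r2 !mulr1 !mulr0 !addr0.
by case=> [[a0 b0]|c0]; case=> [[a1 b1]|c1]; case=> [[a2 b2]|c2]; lra.
Qed.

Lemma step_reward001 : 0 <= e -> r i0 = 0 -> r i1 = 0 -> r i2 = 1 ->
  (x i0 = 0 \/ x i0 <= p i0 - e / 3) /\ (x i1 = 0 \/ x i1 <= p i1 - e / 3).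
Proof.
move=> e_ge0 r0 r1 r2; have [p0 p1 p2 ps] := in_simplex3 Sp.
have [x0 x1 x2 xs] := in_simplex3 Sx.
have [] := step3_cases; rewrite r0 r1 r2 !mulr1 !mulr0 !addr0.
by case=> [[a0 b0]|c0]; case=> [[a1 b1]|c1]; case=> [[a2 b2]|c2]; split; lra.
Qed.

End ThreeActions.

Lemma batch_rewards_le01 (R : realType) (alpha t : nat) :
  batch_rewards R alpha t i0 <= batch_rewards R alpha t i1.
Proof. by rewrite /batch_rewards; do 2?case: ifP => _ /=; rewrite ?lexx ?ler01. Qed.

Definition swap01 : {ffun 'I_3 -> 'I_3} := [ffun k => if k == i0 then i1 else k].

Lemma swap_regret_phi_swap01 (R : realType) (T : nat) (pi r : nat -> 'I_3 -> R) :
  swap_regret_phi T pi r swap01 = \sum_(t < T) pi t i0 * (r t i1 - r t i0).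
Proof.
apply: eq_bigr => t _; rewrite sum3 !ffunE eqxx /=.
by rewrite !subrr !mulr0 !addr0.
Qed.

Lemma sum_arith (R : realType) (a d : R) (n : nat) :
  \sum_(j < n) (a - j%:R * d) = n%:R * a - d * (n%:R * (n%:R - 1)) / 2.
Proof.
elim: n => [|n IH]; first by rewrite big_ord0; ring.
by rewrite big_ord_recr /= IH -[n.+1]addn1 natrD; field.
Qed.

Section BatchDynamics.
Variables (R : realType) (eta : R) (m A : nat) (pi : nat -> 'I_3 -> R).
Hypotheses (eta_gt0 : 0 < eta) (m_eta : m%:R * (2 * eta) = 1) (A_def : A = (200 * m)%N)
  (oga : agile_oga eta (batch_rewards R A) pi).

Local Notation r := (batch_rewards R A).

Lemma A_eta : A%:R * eta = 100.
Proof.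
rewrite A_def natrM.
have -> : 200%:R * m%:R * eta = 100 * (m%:R * (2 * eta)) :> R by ring.
by rewrite m_eta mulr1.
Qed.

Lemma eta_succ (k : nat) : k.+1%:R * eta = k%:R * eta + eta.
Proof. by rewrite mulrSr mulrDl mul1r. Qed.

Lemma simplex_pi t : in_simplex (pi t).
Proof.
case: t => [|t]; last by case: (oga.2 t).
split=> [k|]; rewrite ?sum3 !oga.1; first by rewrite invr_ge0 ler0n.
lra.
Qed.

Lemma oga_threshold t :
  exists l, forall k, pi t.+1 k = Num.max (pi t k + eta * r t k - l) 0.
Proof. by have [Sx x_min] := oga.2 t; exact: simplex_projection_threshold x_min. Qed.

Lemma batch_round b j : (j < 3 * A)%N -> ((3 * A * b + j) %% (3 * A) = j)%N.
Proof. by move=> j_lt; rewrite mulnC modnMDl modn_small. Qed.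

Lemma rewards_phase1 b k : (k < A)%N ->
  [/\ r (3*A*b + k) i0 = 1, r (3*A*b + k) i1 = 1 & r (3*A*b + k) i2 = 0].
Proof. by move=> k_lt; rewrite /batch_rewards batch_round ?k_lt //; lia. Qed.

Lemma rewards_phase2 b k : (k < A)%N ->
  [/\ r (3*A*b + (A + k)) i0 = 0, r (3*A*b + (A + k)) i1 = 1
    & r (3*A*b + (A + k)) i2 = 0].
Proof.
move=> k_lt; rewrite /batch_rewards batch_round; last by lia.
have [-> ->] : (A + k < A)%N = false /\ (A + k < 2 * A)%N by split; lia.
by [].
Qed.

Lemma rewards_phase3 b k : (k < A)%N ->
  [/\ r (3*A*b + (2*A + k)) i0 = 0, r (3*A*b + (2*A + k)) i1 = 0
    & r (3*A*b + (2*A + k)) i2 = 1].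
Proof.
move=> k_lt; rewrite /batch_rewards batch_round; last by lia.
by have [-> ->] : (2*A + k < A)%N = false /\ (2*A + k < 2 * A)%N = false by split; lia.
Qed.

Lemma phase3_inv b k : (k <= A)%N ->
  (pi (3*A*b + (2*A + k)) i0 = 0 \/ pi (3*A*b + (2*A + k)) i0 <= 1 - k%:R * eta / 3) /\
  (pi (3*A*b + (2*A + k)) i1 = 0 \/ pi (3*A*b + (2*A + k)) i1 <= 1 - k%:R * eta / 3).
Proof.
(* [lra] ignores section hypotheses, so [eta_gt0] is restated locally. *)
have eta_pos := eta_gt0.
elim: k => [|k IH] k_le.
  have [p0 p1 p2 ps] := in_simplex3 (simplex_pi (3*A*b + (2*A + 0))).
  by rewrite mul0r mul0r subr0; split; right; lra.
have k_lt : (k < A)%N by lia.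
have [IH0 IH1] := IH (ltnW k_lt).
have [l Hl] := oga_threshold (3*A*b + (2*A + k)).
have [r0 r1 r2] := rewards_phase3 b k_lt.
have [x0 x1 _ _] := in_simplex3 (simplex_pi (3*A*b + (2*A + k)).+1).
have [D0 D1] := step_reward001 (simplex_pi _) (simplex_pi _) Hl (ltW eta_pos) r0 r1 r2.
rewrite !addnS eta_succ.
by split; [case: D0; case: IH0 | case: D1; case: IH1] => ? ?; (left + right); lra.
Qed.

Lemma batch_start_balanced b : pi (3*A*b) i0 = pi (3*A*b) i1.
Proof.
case: b => [|b]; first by rewrite muln0 !oga.1.
have [p0 p1 _ _] := in_simplex3 (simplex_pi (3*A*b + (2*A + A))).
have := phase3_inv b (leqnn A); rewrite A_eta.
have -> : (3*A*b.+1 = 3*A*b + (2*A + A))%N by lia.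
by case=> [[?|?] [?|?]]; lra.
Qed.

Lemma phase1_inv b k : (k <= A)%N ->
  pi (3*A*b + k) i0 = pi (3*A*b + k) i1 /\
  (pi (3*A*b + k) i2 = 0 \/ pi (3*A*b + k) i2 <= 1 - 2/3 * (k%:R * eta)).
Proof.
have eta_pos := eta_gt0.
elim: k => [|k IH] k_le.
  have [p0 p1 p2 ps] := in_simplex3 (simplex_pi (3*A*b)).
  by rewrite addn0 batch_start_balanced mul0r mulr0; split; last (right; lra).
have k_lt : (k < A)%N by lia.
have [IH01 IH2] := IH (ltnW k_lt).
have [l Hl] := oga_threshold (3*A*b + k).
have [r0 r1 r2] := rewards_phase1 b k_lt.
have [_ _ x2 _] := in_simplex3 (simplex_pi (3*A*b + k).+1).
have [D01 D2] := step_reward110 (simplex_pi _) (simplex_pi _) Hl r0 r1 r2 IH01.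
rewrite !addnS eta_succ; split => //.
by case: D2; case: IH2 => ? ?; (left + right); lra.
Qed.

Lemma phase1_end b : pi (3*A*b + A) i0 = 1/2.
Proof.
have [p0 p1 p2 ps] := in_simplex3 (simplex_pi (3*A*b + A)).
have [E01] := phase1_inv b (leqnn A); rewrite A_eta.
by case; lra.
Qed.

Lemma phase2_lower b k : (k <= A)%N -> 1/2 - k%:R * eta <= pi (3*A*b + (A + k)) i0.
Proof.
elim: k => [|k IH] k_le; first by rewrite addn0 phase1_end mul0r subr0.
have k_lt : (k < A)%N by lia.
have [l Hl] := oga_threshold (3*A*b + (A + k)).
have [r0 r1 r2] := rewards_phase2 b k_lt.
have D0 := step_reward010 (simplex_pi _) (simplex_pi _) Hl (ltW eta_gt0) r0 r1 r2.
rewrite !addnS eta_succ.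
have := IH (ltnW k_lt); lra.
Qed.

Local Notation gain t := (pi t i0 * (r t i1 - r t i0)).

Lemma gain_ge0 t : 0 <= gain t.
Proof.
have [p0 _ _ _] := in_simplex3 (simplex_pi t).
by rewrite mulr_ge0 // subr_ge0 batch_rewards_le01.
Qed.

Lemma batch_gain b : m%:R / 4 <= \sum_(j < 3*A) gain (3*A*b + j).
Proof.
have split3 : (3*A = A + (m + (2*A - m)))%N by rewrite A_def; lia.
rewrite split3 !big_split_ord /= -split3.
have ge0 (n : nat) (F : nat -> nat) : 0 <= \sum_(j < n) gain (F j).
  by apply: sumr_ge0 => j _; exact: gain_ge0.
have early : m%:R / 4 <= \sum_(j < m) gain (3*A*b + (A + j)).
  have : \sum_(j < m) (1/2 - j%:R * eta) <= \sum_(j < m) gain (3*A*b + (A + j)).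
    apply: ler_sum => j _; have j_lt : (j < A)%N by have := ltn_ord j; rewrite A_def; lia.
    have [r0 r1 _] := rewards_phase2 b j_lt.
    by rewrite r0 r1 subr0 mulr1 phase2_lower // ltnW.
  rewrite sum_arith.
  have -> : eta * (m%:R * (m%:R - 1)) / 2 = m%:R * (2 * eta) * (m%:R - 1) / 4 by field.
  rewrite m_eta; lra.
have := ge0 A (fun j => 3*A*b + j)%N.
have := ge0 (2*A - m)%N (fun j => 3*A*b + (A + (m + j)))%N.
lra.
Qed.

Lemma total_gain n : n%:R * (m%:R / 4) <= \sum_(t < 3*A*n) gain t.
Proof.
elim: n => [|n IH]; first by rewrite muln0 big_ord0 mul0r.
by rewrite mulnSr big_split_ord mulrSr mulrDl mul1r lerD // batch_gain.
Qed.

Lemma swap_regret_ge n : n%:R * (m%:R / 4) <= swap_regret (3*A*n) pi r.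
Proof.
apply: le_trans (total_gain n) _.
by rewrite -swap_regret_phi_swap01; exact: le_bigmax.
Qed.

End BatchDynamics.

Theorem mainTheorem10 (R : realType) :
  exists c : R, 0 < c /\
  forall (eta : R) (m beta : nat) (pi : nat -> 'I_3 -> R),
    0 < eta -> (2 * eta)^-1 = m%:R ->
    let alpha := (200 * m)%N in
    let T := (3 * alpha * beta)%N in
    agile_oga eta (batch_rewards R alpha) pi ->
    swap_regret T pi (batch_rewards R alpha) >= c * T%:R.
Proof.
exists (1 / 2400); split; first lra.
move=> eta m beta pi eta_gt0 inv_eta alpha T oga.
have m_eta : m%:R * (2 * eta) = 1 by rewrite -inv_eta mulVf // mulf_neq0 // gt_eqF.
have -> : 1 / 2400 * T%:R = beta%:R * (m%:R / 4) :> R by rewrite /T /alpha !natrM; field.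
exact: (swap_regret_ge eta_gt0 m_eta (erefl alpha) oga).
Qed.
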